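(* For every $0<\epsilon<1$ there is an infinite family of graphs $G_n$ on $n$ vertices ($n\to\infty$) with edge density at most $1+\Theta(n^{-\epsilon})$ such that Broadcast on $G_n$ is not solvable with fewer than $\Theta(n^{1-\epsilon})$ ignorant agents.
   Context: Edge density of a graph with $m$ edges and $n$ nodes is $m/n$. Broadcast model: a connected base graph $G=(V,E)$ with $n$ nodes. There is one source agent holding a message $\mathcal M$ and $k\ge1$ ignorant agents (agents not holding $\mathcal M$); initially all agents occupy pairwise distinct nodes, the initial placement being chosen by the adversary. Time proceeds in synchronous rounds; in each round: (1) the adversary removes a (possibly empty) set $E'\subseteq E$ of edges such that $(V,E\setminus E')$ is connected; (2) each agent (agents have unique IDs, local memory, and see the entire current graph, the positions of all agents and which agents hold $\mathcal M$) chooses either to stay or to traverse an edge of $E\setminus E'$ incident to its current node; (3) agents move. Whenever an ignorant agent is at the same node as an agent holding $\mathcal M$, it receives $\mathcal M$ and becomes a source agent. The adversary is adaptive and knows the agents' strategy. Broadcast is solvable on $G$ with $k$ ignorant agents if the agents have a strategy such that, for every initial placement and every adversary behaviour, after finitely many rounds all agents hold $\mathcal M$; otherwise the adversary is said to have a winning strategy. *)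

From mathcomp Require Import all_boot.
From Stdlib Require Import Reals.

Set Implicit Arguments.
Unset Strict Implicit.
Unset Printing Implicit Defensive.

Definition graph (n : nat) := {set {set 'I_n}}.

Definition simple_graph n (G : graph n) : Prop := forall e, e \in G -> #|e| = 2.

Definition adj n (G : graph n) : rel 'I_n := fun u v => [set u; v] \in G.

Definition connected_graph n (G : graph n) : Prop :=
  forall u v : 'I_n, connect (adj G) u v.

Definition admissible_removal n (G : graph n) (R : graph n) : Prop :=
  R \subset G /\ connected_graph (G :\: R).

(* Agents are 'I_k.+1 : agent ord0 is the source, the other k agents are ignorant.
   A configuration: positions of agents, and the set of agents holding M. *)
Definition config n k := ({ffun 'I_k.+1 -> 'I_n} * {set 'I_k.+1})%type.

Definition history n k := seq (config n k * graph n).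

Definition adversary n k := history n k -> config n k -> graph n.

(* Joint agent strategy (agents have IDs, memory and full information):
   given history, current configuration and current removed edges, each agent
   chooses None (stay) or Some v (traverse the edge to v). *)
Definition strategy n k :=
  history n k -> config n k -> graph n -> {ffun 'I_k.+1 -> option 'I_n}.

(* A move is legal iff the edge to the target is present in E \ E';
   an illegal request is treated as staying. *)
Definition new_pos n k (G R : graph n) (c : config n k)
  (mv : {ffun 'I_k.+1 -> option 'I_n}) : {ffun 'I_k.+1 -> 'I_n} :=
  [ffun i => match mv i with
             | Some v => if [set c.1 i; v] \in G :\: R then v else c.1 i
             | None => c.1 i
             end].

Definition step n k (G R : graph n) (c : config n k)
  (mv : {ffun 'I_k.+1 -> option 'I_n}) : config n k :=
  let p := new_pos G R c mv in
  (p, [set i | [exists j in c.2, p j == p i]]).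

Fixpoint run n k (G : graph n) (s : strategy n k) (a : adversary n k)
  (c0 : config n k) (t : nat) : config n k * history n k :=
  match t with
  | 0 => (c0, [::])
  | t'.+1 =>
      let ch := run G s a c0 t' in
      let c := ch.1 in let h := ch.2 in
      let R := a h c in
      (step G R c (s h c R), rcons h (c, R))
  end.

Definition broadcast_solvable n (G : graph n) (k : nat) : Prop :=
  exists s : strategy n k,
    forall p0 : {ffun 'I_k.+1 -> 'I_n}, injective p0 ->
    forall a : adversary n k,
      (forall h c, admissible_removal G (a h c)) ->
      exists t, (run G s a (p0, [set ord0]) t).1.2 = [set: 'I_k.+1].

(* The graph has two adjacent gates 0 and 1, both joined to the K+1 hubs
   2, ..., K+2, and a star centred at node 2 spanning all remaining nodes:
   n nodes and n + 2K edges.  The adversary keeps the source on the gates and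
   the ignorant agents off them by deleting, every round, each gate-to-hub edge
   at the source's gate or at an occupied hub.  With k <= K ignorant agents
   some hub is free, and its edge to the gate not holding the source survives,
   so the graph stays connected while the source never meets anybody.
   Taking K ~ n^(1-eps) gives edge density 1 + O(n^(-eps)). *)

From Stdlib Require Import Lia.
From mathcomp Require Import all_boot zify.
From Stdlib Require Import Reals Lra.

Set Implicit Arguments.
Unset Strict Implicit.
Unset Printing Implicit Defensive.

Lemma adj_sym n (G : graph n) : symmetric (adj G).
Proof. by move=> u v; rewrite /adj setUC. Qed.

Section GateGraph.
Variable n' : nat.
Implicit Types (H : graph n'.+1) (a b : nat).

Lemma mem_set2_inord (x : 'I_n'.+1) a b : a <= n' -> b <= n' ->
  x \in [set inord a; inord b] -> x = a :> nat \/ x = b :> nat.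
Proof.
by move=> ha hb; rewrite !inE => /orP[] /eqP->; rewrite inordK; auto.
Qed.

Lemma card_set2_inord a b : a <= n' -> b <= n' -> a != b ->
  #|[set (inord a : 'I_n'.+1); inord b]| = 2.
Proof.
move=> ha hb hab; rewrite cards2; case: eqP => // /(congr1 val).
by rewrite /= !inordK // => /eqP; rewrite (negbTE hab).
Qed.

Lemma connected_through_center H t y :
  2 <= n' -> [set inord 0; inord 1] \in H ->
  (forall j, 3 <= j <= n' -> [set inord 2; inord j] \in H) ->
  t <= 1 -> 2 <= y <= n' -> [set inord t; inord y] \in H ->
  connected_graph H.
Proof.
move=> hn H01 Hstar ht hy Hty.
have sym := sym_connect_sym (adj_sym H).
have hub_center (u : 'I_n'.+1) : 2 <= u -> connect (adj H) u (inord 2).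
  move=> hu; have [u2|u3] := eqVneq (nat_of_ord u) 2.
    by rewrite -[u]inord_val u2 connect0.
  apply: connect1; rewrite /adj setUC -[u]inord_val; apply: Hstar.
  by have := ltn_ord u; lia.
have gate_link a b : a <= 1 -> b <= 1 ->
    connect (adj H) (inord a) (inord b).
  case: a b => [|[|?]] [|[|?]] // _ _; try exact: connect0.
    exact: connect1.
  by rewrite sym; apply: connect1.
have center u : connect (adj H) u (inord 2).
  have [hu|hu] := leqP 2 u; first exact: hub_center.
  rewrite -[u]inord_val; apply: connect_trans (gate_link _ t _ ht) _ => //.
  apply: connect_trans (hub_center (inord y) _); first exact: connect1.
  by rewrite inordK; lia.
by move=> u v; apply: connect_trans (center u) _; rewrite sym.
Qed.

Variable K : nat.

Definition gate_edges : seq {set 'I_n'.+1} :=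
  [set inord 0; inord 1] ::
  [seq [set inord 0; inord j] | j <- iota 2 K.+1] ++
  [seq [set inord 1; inord j] | j <- iota 2 K.+1] ++
  [seq [set inord 2; inord j] | j <- iota 3 (n' - 2)].

Definition gate_graph : graph n'.+1 := [set e | e \in gate_edges].

Lemma card_gate_graph : 2 <= n' -> #|gate_graph| <= n'.+1 + 2 * K.
Proof.
move=> hn; rewrite cardsE; apply: leq_trans (card_size _) _.
by rewrite /gate_edges -cat1s !size_cat !size_map !size_iota [size [:: _]]/=; lia.
Qed.

Lemma gate_graph_gates : [set inord 0; inord 1] \in gate_graph.
Proof. by rewrite inE inE eqxx. Qed.

Lemma gate_graph_hub a j : a <= 1 -> 2 <= j <= K.+2 ->
  [set inord a; inord j] \in gate_graph.
Proof.
move=> ha hj; rewrite inE in_cons !mem_cat; apply/orP; right.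
case: a ha => [|[|]] // _; [apply/orP; left | apply/orP; right; apply/orP; left];
  by apply/mapP; exists j; rewrite // mem_iota; lia.
Qed.

Lemma gate_graph_star j : 3 <= j <= n' -> [set inord 2; inord j] \in gate_graph.
Proof.
move=> hj; rewrite inE in_cons !mem_cat.
do 3 (apply/orP; right); by apply/mapP; exists j; rewrite // mem_iota; lia.
Qed.

Hypothesis hubs_fit : K.+2 <= n'.

Lemma gate_graph_simple : simple_graph gate_graph.
Proof.
move=> e; rewrite inE inE => /orP[/eqP->|]; first by apply: card_set2_inord; lia.
by rewrite !mem_cat => /orP[|/orP[]] /mapP[j]; rewrite mem_iota => hj ->;
  apply: card_set2_inord; lia.
Qed.

Lemma gate_graph_connected : connected_graph gate_graph.
Proof.
apply: (@connected_through_center _ 0 2) => //; try lia.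
- exact: gate_graph_gates.
- exact: gate_graph_star.
- by apply: gate_graph_hub; lia.
Qed.

End GateGraph.

Section BlockingAdversary.
Variables (n k : nat) (G : graph n).
Implicit Types (c : config n k) (e : {set 'I_n}).

Definition occupied c (y : 'I_n) := [exists i, c.1 i == y].

Definition blocked_edges c : graph n :=
  [set e in G | [exists x, exists y,
     [&& e == [set x; y], x <= 1, 2 <= y & (x == c.1 ord0) || occupied c y]]].

(* Falling back to removing nothing keeps the adversary admissible on every
   connected graph; on the gate graph the fallback never triggers. *)
Definition blocking_adversary : adversary n k := fun _ c =>
  if [forall u, forall v, connect (adj (G :\: blocked_edges c)) u v]
  then blocked_edges c else set0.

Lemma blocking_adversary_admissible h c :
  connected_graph G -> admissible_removal G (blocking_adversary h c).
Proof.
rewrite /blocking_adversary => HG; case: ifP => [/forallP Hc|_].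
  split; first by apply/subsetP => e; rewrite inE => /andP[].
  by move=> u v; have /forallP := Hc u; apply.
by split; [apply: sub0set | rewrite setD0].
Qed.

Lemma blocking_adversary_blocks h c :
  connected_graph (G :\: blocked_edges c) ->
  blocking_adversary h c = blocked_edges c.
Proof.
by move=> Hc; rewrite /blocking_adversary ifT //; apply/forallP => u;
  apply/forallP => v; apply: Hc.
Qed.

Lemma unblocked_edge c e : e \in G ->
  (forall x y, x \in e -> y \in e -> x <= 1 -> 2 <= y ->
     (x == c.1 ord0) || occupied c y -> False) ->
  e \in G :\: blocked_edges c.
Proof.
move=> eG noblock; rewrite !inE eG andbT; apply/existsP => -[x /existsP[y]].
by case/and4P => /eqP ex hx hy; apply: noblock hx hy; rewrite ex !inE eqxx ?orbT.
Qed.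

Lemma source_stays_gate c v : c.1 ord0 <= 1 ->
  [set c.1 ord0; v] \in G :\: blocked_edges c -> v <= 1.
Proof.
move=> hs; rewrite !inE => /andP[unblocked eG].
rewrite leqNgt; apply: contra unblocked => hv; rewrite eG.
by apply/existsP; exists (c.1 ord0); apply/existsP; exists v; rewrite !eqxx hs hv.
Qed.

Lemma ignorant_stays_off_gates c i v : 2 <= c.1 i ->
  [set c.1 i; v] \in G :\: blocked_edges c -> 2 <= v.
Proof.
move=> hi; rewrite !inE => /andP[unblocked eG].
rewrite leqNgt; apply: contra unblocked => hv; rewrite eG.
apply/existsP; exists v; apply/existsP; exists (c.1 i).
by rewrite setUC eqxx hi -ltnS hv orbC; apply/orP; left; apply/existsP; exists i.
Qed.

Definition separated c :=
  [/\ c.1 ord0 <= 1, forall i, i != ord0 -> 2 <= c.1 i & c.2 = [set ord0]].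

Lemma step_separated c mv :
  separated c -> separated (step G (blocked_edges c) c mv).
Proof.
case=> hs hi informed; pose p := new_pos G (blocked_edges c) c mv.
have ps : p ord0 <= 1.
  rewrite /p /new_pos ffunE; case: (mv ord0) => // v.
  by case: ifP => // he; apply: source_stays_gate he.
have pi i : i != ord0 -> 2 <= p i.
  move=> i0; rewrite /p /new_pos ffunE; case: (mv i) => [v|]; last exact: hi.
  by case: ifP => [he|_]; [apply: ignorant_stays_off_gates he|]; apply: hi.
split; [exact: ps | exact: pi | apply/setP => i; rewrite !inE informed -/p].
apply/existsP/eqP => [[j]|->]; last by exists ord0; rewrite inE !eqxx.
rewrite inE => /andP[/eqP-> /eqP meet]; apply/eqP; apply: contraTT ps => i0.
by rewrite -ltnNge meet; apply: pi.
Qed.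

End BlockingAdversary.

Section GateGraphBroadcast.
Variables n' K k : nat.
Hypotheses (hubs_fit : K.+2 <= n') (few_agents : k <= K).
Let G := gate_graph n' K.

Lemma exists_free_hub (c : config n'.+1 k) : separated c ->
  exists y : 'I_n'.+1, 2 <= y <= K.+2 /\ ~~ occupied c y.
Proof.
case=> hs _ _.
case: (boolP [exists y : 'I_n'.+1, (2 <= y <= K.+2) && ~~ occupied c y]).
  by case/existsP => y /andP[hy free]; exists y.
rewrite negb_exists => /forallP full; exfalso.
pose hub (j : 'I_K.+1) : 'I_n'.+1 := inord (j + 2).
have hubE (j : 'I_K.+1) : hub j = j + 2 :> nat.
  by rewrite inordK //; have := ltn_ord j; lia.
have hub_inj : injective hub.
  by move=> i j /(congr1 val); rewrite /= !hubE => /addIn /val_inj.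
have : hub @: setT \subset c.1 @: [set~ ord0].
  apply/subsetP => _ /imsetP[j _ ->].
  have hub_range : 2 <= hub j <= K.+2 by rewrite hubE; have := ltn_ord j; lia.
  have /existsP[i /eqP hi] : occupied c (hub j).
    by move: (full (hub j)); rewrite hub_range negbK.
  apply/imsetP; exists i => //; rewrite !inE; apply: contraTneq hs => i0.
  by rewrite -i0 hi hubE -ltnNge; lia.
move/subset_leq_card/leq_trans/(_ (leq_imset_card _ _)).
by rewrite card_imset // cardsT cardsC1 !card_ord; lia.
Qed.

Lemma gate_graph_unblocked_connected (c : config n'.+1 k) : separated c ->
  connected_graph (G :\: blocked_edges G c).
Proof.
move=> sep; have [hs _ _] := sep; have [y [hy free]] := exists_free_hub sep.
pose g := 1 - c.1 ord0.
apply: (@connected_through_center _ _ g y); first lia.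
- apply: unblocked_edge; first exact: gate_graph_gates.
  by move=> x z _ /mem_set2_inord; lia.
- move=> j hj; apply: unblocked_edge; first exact: gate_graph_star.
  by move=> x z /mem_set2_inord; lia.
- lia.
- by have := ltn_ord y; lia.
- apply: unblocked_edge; first by apply: gate_graph_hub; lia.
  move=> x z /mem_set2_inord hx /mem_set2_inord hz x1 z2.
  have xg : x = g :> nat by have := ltn_ord y; lia.
  have zy : z = y by apply: ord_inj; have := ltn_ord y; lia.
  by rewrite zy (negbTE free) orbF => /eqP /(congr1 (@nat_of_ord _)); lia.
Qed.

Lemma run_separated (s : strategy n'.+1 k) (c0 : config n'.+1 k) t :
  separated c0 -> separated (run G s (blocking_adversary G) c0 t).1.
Proof.
move=> sep0; elim: t => [|t IH] //=.
rewrite blocking_adversary_blocks; last exact: gate_graph_unblocked_connected.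
exact: step_separated.
Qed.

Lemma gate_graph_not_solvable : 1 <= k -> ~ broadcast_solvable G k.
Proof.
move=> k1 [s solves].
pose p0 : {ffun 'I_k.+1 -> 'I_n'.+1} :=
  [ffun i => inord (if i == ord0 then 0 else i.+1)].
have p0E i : p0 i = (if i == ord0 then 0 else i.+1) :> nat.
  by rewrite ffunE inordK //; case: ifP => //; have := ltn_ord i; lia.
have p0_inj : injective p0.
  move=> i j /(congr1 (@nat_of_ord _)); rewrite !p0E => eq_ij; apply: ord_inj.
  by move: eq_ij; case: (i =P ord0) => [->|_]; case: (j =P ord0) => [->|_] //=; lia.
have sep0 : separated (p0, [set ord0]).
  split=> //= [|i i0]; rewrite p0E ?eqxx ?(negbTE i0) //.
  by case: i i0 => -[].
have [t done] := solves p0 p0_inj (blocking_adversary G)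
  (fun h c => blocking_adversary_admissible h c (gate_graph_connected hubs_fit)).
have [_ _ informed] := run_separated s t sep0.
move: done; rewrite informed => /setP /(_ (inord 1)).
by rewrite !inE => /eqP /(congr1 val); rewrite /= inordK.
Qed.

End GateGraphBroadcast.

Section RealBounds.
Local Open Scope R_scope.

Lemma exists_nat_between (x : R) : 0 <= x -> exists K : nat, x < INR K <= x + 1.
Proof.
move=> hx; have [x_up up_x] := archimed x.
have up_pos : (0 < up x)%Z by apply: lt_0_IZR; lra.
exists (Z.to_nat (up x)); rewrite INR_IZR_INZ Znat.Z2Nat.id; [lra | lia].
Qed.

Lemma Rpower_pos a b : 0 < Rpower a b.
Proof. exact: exp_pos. Qed.

Lemma Rpower_ge_2 eps n : 0 < eps -> Rpower 2 (/ eps) <= n -> 2 <= Rpower n eps.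
Proof.
move=> eps0 hn.
have -> : 2 = Rpower (Rpower 2 (/ eps)) eps.
  by rewrite Rpower_mult Rinv_l ?Rpower_1; lra.
by apply: Rle_Rpower_l; [lra | split; [exact: Rpower_pos | done]].
Qed.

Lemma Rpower_sub_add eps n : 0 < n -> Rpower n (1 - eps) * Rpower n eps = n.
Proof.
by move=> n0; rewrite -Rpower_plus; replace (1 - eps + eps) with 1 by ring;
  apply: Rpower_1.
Qed.

Lemma density_bound n eps K : 1 <= n -> eps < 1 ->
  K <= Rpower n (1 - eps) + 1 -> (n + 2 * K) / n <= 1 + 4 * Rpower n (- eps).
Proof.
move=> n1 eps1 hK; set y := Rpower n (- eps).
have ny : n * y = Rpower n (1 - eps).
  by rewrite /y -{1}(Rpower_1 n) 1?Rpower_plus; [f_equal; ring | lra].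
have ny1 : 1 <= n * y.
  rewrite ny -[X in X <= _](Rpower_O n); last lra.
  by apply: Rle_Rpower; lra.
apply: (Rmult_le_reg_r n); first lra.
by rewrite /Rdiv Rmult_assoc Rinv_l; nra.
Qed.

Lemma hubs_fit_bound n eps K : 8 <= n -> 2 <= Rpower n eps ->
  K <= Rpower n (1 - eps) + 1 -> K + 3 <= n.
Proof.
move=> n8 ne hK; have := Rpower_sub_add eps (ltac:(lra) : 0 < n).
have := Rpower_pos n (1 - eps); nra.
Qed.

End RealBounds.

Theorem corollary1 (eps : R) :
  (0 < eps < 1)%R ->
  exists c1 c2 : R, (0 < c1)%R /\ (0 < c2)%R /\
    forall N : nat, exists n : nat, (N <= n)%N /\
      exists G : graph n,
        simple_graph G /\ connected_graph G /\
        (INR #|G| / INR n <= 1 + c1 * Rpower (INR n) (- eps))%R /\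
        forall k : nat, (1 <= k)%N ->
          (INR k < c2 * Rpower (INR n) (1 - eps))%R ->
          ~ broadcast_solvable G k.
Proof.
move=> [eps0 eps1]; exists 4%R, 1%R; do 2 (split; first lra); move=> N.
have [m [hm _]] := exists_nat_between (Rlt_le _ _ (Rpower_pos 2 (/ eps))).
pose n' := maxn N (maxn m 7).
have [n8 mn] : (8 <= INR n'.+1 /\ INR m <= INR n'.+1)%R.
  split; last by apply/le_INR/leP; lia.
  by rewrite -[8%R]/(IZR (Z.of_nat 8)) -INR_IZR_INZ; apply/le_INR/leP; lia.
have n_eps := Rpower_ge_2 eps0 (Rle_trans _ _ _ (Rlt_le _ _ hm) mn).
have [K [xK Kx]] :=
  exists_nat_between (Rlt_le _ _ (Rpower_pos (INR n'.+1) (1 - eps))).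
have fit : (K.+2 <= n')%N.
  have := hubs_fit_bound n8 n_eps Kx.
  by rewrite -[3%R]/(IZR (Z.of_nat 3)) -INR_IZR_INZ -plus_INR => /INR_le /leP; lia.
exists n'.+1; split; first lia.
exists (gate_graph n' K); split; first exact: gate_graph_simple.
split; first exact: gate_graph_connected.
split.
  apply: Rle_trans (density_bound _ eps1 Kx); last lra.
  apply: Rmult_le_compat_r; first by left; apply: Rinv_0_lt_compat; lra.
  have /leP/le_INR := card_gate_graph K (ltac:(lia) : (2 <= n')%N).
  by rewrite plus_INR mult_INR.
move=> k k1 kx; apply: gate_graph_not_solvable fit _ k1.
by apply/leP/INR_le; lra.
Qed.
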